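(* Let $\alpha\in[0,2]$ and consider $\mathcal{B}_\alpha(6,3)$. Let $S_a=\{(2,2,2)',(3,3,0)',(3,0,3)',(0,3,3)',(4,1,1)',(1,4,1)',(1,1,4)'\}$ and $S_b=\{(4,2,0)',(4,0,2)',(2,4,0)',(2,0,4)',(0,4,2)',(0,2,4)'\}$, and let $\sigma$ be the mixed strategy with $\sigma(s)=1/10$ for $s\in S_a$, $\sigma(s)=1/20$ for $s\in S_b$, and $\sigma(s)=0$ otherwise. Then $\sigma$ induces uniform marginals (each battlefield's bid is uniform on $\{0,1,2,3,4\}$) and $\sigma$ is a symmetric equilibrium strategy of $\mathcal{B}_\alpha(6,3)$.
   Context: Fix integers $N\ge1$, $K\ge2$ and a real number $\alpha$. The Colonel Blotto game $\mathcal{B}_\alpha(N,K)$ is the two-player simultaneous-move game with players $A,B$, each with pure strategy set $S=\{s\in\{0,1,\ldots,N\}^K:\sum_{k=1}^K s_k=N\}$, in which the payoff of player $i$ at the pure profile $(s^i,s^{-i})$ is $\pi^i(s^i,s^{-i})=\sum_{k=1}^K\big(\mathbf 1[s^i_k>s^{-i}_k]+\tfrac{\alpha}{2}\mathbf 1[s^i_k=s^{-i}_k]\big)$. Mixed strategies are probability distributions on $S$, with expected payoffs under independent randomization. A symmetric equilibrium strategy is a mixed strategy $\sigma$ such that $(\sigma,\sigma)$ is a Nash equilibrium. When $K$ divides $N$ and $m=N/K$, $\sigma$ induces uniform marginals if for every battlefield $k$ the distribution of $s_k$ under $s\sim\sigma$ is uniform on $\{0,1,\ldots,2m\}$. *)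

From HB Require Import structures.
From mathcomp Require Import all_boot all_order all_algebra.
From mathcomp Require Import reals.
Set Implicit Arguments. Unset Strict Implicit. Unset Printing Implicit Defensive.
Import Order.TTheory GRing.Theory Num.Theory.
Local Open Scope ring_scope.

Definition bidvec (N K : nat) := {ffun 'I_K -> 'I_N.+1}.

Definition is_pure (N K : nat) (s : bidvec N K) : bool :=
  (\sum_(k < K) (s k : nat) == N)%N.

Definition blotto_payoff (R : realType) (alpha : R) (N K : nat)
  (s t : bidvec N K) : R :=
  \sum_(k < K) ((((s k : nat) > t k)%N)%:R
                 + alpha / 2%:R * (((s k : nat) == t k))%:R).

(* Mixed strategy: a probability distribution on the pure strategy set S
   (represented on bidvec, with zero mass outside S). *)
Definition is_mixed (R : realType) (N K : nat) (sigma : {ffun bidvec N K -> R})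
  : Prop :=
  (forall s, 0 <= sigma s) /\ (forall s, ~~ is_pure s -> sigma s = 0) /\
  \sum_(s : bidvec N K) sigma s = 1.

Definition exp_payoff (R : realType) (alpha : R) (N K : nat)
  (tau sigma : {ffun bidvec N K -> R}) : R :=
  \sum_(s : bidvec N K) \sum_(t : bidvec N K)
     tau s * sigma t * blotto_payoff alpha s t.

Definition is_nash (R : realType) (alpha : R) (N K : nat)
  (tauA tauB : {ffun bidvec N K -> R}) : Prop :=
  is_mixed tauA /\ is_mixed tauB /\
  (forall rho, is_mixed rho ->
     exp_payoff alpha rho tauB <= exp_payoff alpha tauA tauB) /\
  (forall rho, is_mixed rho ->
     exp_payoff alpha rho tauA <= exp_payoff alpha tauB tauA).

Definition symmetric_equilibrium (R : realType) (alpha : R) (N K : nat)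
  (sigma : {ffun bidvec N K -> R}) : Prop := is_nash alpha sigma sigma.

Definition uniform_marginals (R : realType) (N K : nat)
  (sigma : {ffun bidvec N K -> R}) : Prop :=
  let m := (N %/ K)%N in
  forall (k : 'I_K) (j : 'I_N.+1),
    \sum_(s : bidvec N K | s k == j) sigma s =
      if (j <= 2 * m)%N then (2 * m).+1%:R^-1 else 0.

Definition bv3 (a b c : nat) : seq nat := [:: a; b; c].
Definition S_a : seq (seq nat) :=
  [:: bv3 2 2 2; bv3 3 3 0; bv3 3 0 3; bv3 0 3 3; bv3 4 1 1; bv3 1 4 1;
      bv3 1 1 4].
Definition S_b : seq (seq nat) :=
  [:: bv3 4 2 0; bv3 4 0 2; bv3 2 4 0; bv3 2 0 4; bv3 0 4 2; bv3 0 2 4].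
Definition as_list (s : bidvec 6 3) : seq nat := [seq (s k : nat) | k <- enum 'I_3].

Definition sigma63 (R : realType) : {ffun bidvec 6 3 -> R} :=
  [ffun s => if as_list s \in S_a then 10%:R^-1
             else if as_list s \in S_b then 20%:R^-1 else 0].

(* Against sigma, every pure strategy (x, y, z) with x + y + z = 6 wins at most
   24/20 battlefields and ties at most 12/20 in expectation, with equality on
   the support of sigma; since alpha >= 0, the expected payoff against sigma is
   thus maximised by every strategy of its support, which is the symmetric
   equilibrium property. These counts, the marginals and the normalisation are
   finite tables over {0,...,6}^3, checked by computation. *)
From HB Require Import structures.
From mathcomp Require Import all_boot all_order all_algebra.
From mathcomp Require Import reals.
From mathcomp Require Import ring.
Set Implicit Arguments. Unset Strict Implicit. Unset Printing Implicit Defensive.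
Import Order.TTheory GRing.Theory Num.Theory.
Local Open Scope ring_scope.

Section SymmetricEquilibrium.
Variables (R : realType) (alpha : R) (N K : nat).
Implicit Types (sigma rho tau : {ffun bidvec N K -> R}) (s t : bidvec N K).

Definition value_against sigma s : R :=
  \sum_t sigma t * blotto_payoff alpha s t.

Lemma exp_payoffE tau sigma :
  exp_payoff alpha tau sigma = \sum_s tau s * value_against sigma s.
Proof.
apply: eq_bigr => s _; rewrite /value_against mulr_sumr.
by apply: eq_bigr => t _; rewrite mulrA.
Qed.

Lemma exp_payoff_le rho sigma c :
  is_mixed rho -> (forall s, is_pure s -> value_against sigma s <= c) ->
  exp_payoff alpha rho sigma <= c.
Proof.
move=> [rho_ge0 [rho_pure rho_sum1]] le_c; rewrite exp_payoffE.
apply: (@le_trans _ _ (\sum_s rho s * c)); last by rewrite -mulr_suml rho_sum1 mul1r.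
apply: ler_sum => s _; have [/le_c le_sc | /rho_pure ->] := boolP (is_pure s).
  exact: ler_wpM2l.
by rewrite !mul0r.
Qed.

Lemma exp_payoff_on_support sigma c :
  is_mixed sigma -> (forall s, sigma s != 0 -> value_against sigma s = c) ->
  exp_payoff alpha sigma sigma = c.
Proof.
move=> [_ [_ sigma_sum1]] eq_c; rewrite exp_payoffE.
transitivity (\sum_s sigma s * c); last by rewrite -mulr_suml sigma_sum1 mul1r.
apply: eq_bigr => s _; have [-> | /eq_c -> //] := eqVneq (sigma s) 0.
by rewrite !mul0r.
Qed.

Lemma symmetric_equilibrium_of_value_bound sigma c :
  is_mixed sigma ->
  (forall s, is_pure s -> value_against sigma s <= c) ->
  (forall s, sigma s != 0 -> value_against sigma s = c) ->
  symmetric_equilibrium alpha sigma.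
Proof.
move=> mixed le_c eq_c.
have best rho : is_mixed rho ->
    exp_payoff alpha rho sigma <= exp_payoff alpha sigma sigma.
  by move=> mixed_rho; rewrite (exp_payoff_on_support mixed eq_c) exp_payoff_le.
by do 3!split => //.
Qed.

End SymmetricEquilibrium.

Definition i0 : 'I_3 := @Ordinal 3 0 isT.
Definition i1 : 'I_3 := @Ordinal 3 1 isT.
Definition i2 : 'I_3 := @Ordinal 3 2 isT.

Lemma ord3P (P : 'I_3 -> Prop) : P i0 -> P i1 -> P i2 -> forall k, P k.
Proof.
move=> P0 P1 P2 [[|[|[|m]]] lt_k3] //.
- by rewrite (_ : Ordinal lt_k3 = i0) //; apply: val_inj.
- by rewrite (_ : Ordinal lt_k3 = i1) //; apply: val_inj.
- by rewrite (_ : Ordinal lt_k3 = i2) //; apply: val_inj.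
Qed.

Lemma big_ord3 (f : 'I_3 -> nat) : (\sum_k f k = f i0 + f i1 + f i2)%N.
Proof.
rewrite !big_ord_recr big_ord0 /= add0n.
by congr (f _ + f _ + f _)%N; apply: val_inj.
Qed.

Section ThreeBattlefields.
Variable N : nat.
Local Notation bid := (bidvec N 3).

Definition bid3 (a b c : 'I_N.+1) : bid := [ffun k => tnth [tuple a; b; c] k].

Lemma bid3E a b c : [/\ bid3 a b c i0 = a, bid3 a b c i1 = b & bid3 a b c i2 = c].
Proof. by rewrite !ffunE. Qed.

Lemma big_bid3 (F : bid -> nat) :
  (\sum_(s : bid) F s = \sum_a \sum_b \sum_c F (bid3 a b c))%N.
Proof.
rewrite (reindex (fun p : _ * (_ * _) => bid3 p.1 p.2.1 p.2.2)) /=.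
  by under [RHS]eq_bigr do rewrite pair_big; rewrite pair_big.
exists (fun s => (s i0, (s i1, s i2))) => [[a [b c]] _ | s _].
  by have [-> -> ->] := bid3E a b c.
by apply/ffunP; apply: ord3P; rewrite ffunE.
Qed.

Lemma is_pure3 (s : bid) : is_pure s = ((s i0 : nat) + s i1 + s i2 == N)%N.
Proof. by rewrite /is_pure big_ord3. Qed.

Definition wins3 (s t : bid) : nat := (t i0 < s i0) + (t i1 < s i1) + (t i2 < s i2).
Definition ties3 (s t : bid) : nat := (s i0 == t i0) + (s i1 == t i1) + (s i2 == t i2).

Lemma blotto_payoff3E (R : realType) (alpha : R) (s t : bid) :
  blotto_payoff alpha s t = (wins3 s t)%:R + alpha / 2%:R * (ties3 s t)%:R.
Proof. by rewrite /blotto_payoff big_split /= -mulr_sumr -!natr_sum !big_ord3. Qed.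

End ThreeBattlefields.

(* Sums and quantifiers over {0,...,6} as plain recursion, so that the tables
   below reduce under [vm_compute] (big operators are locked). *)
Definition sum_lt7 (G : nat -> nat) : nat := foldr (fun a acc => G a + acc)%N 0%N (iota 0 7).
Definition sum_grid7 (G : nat -> nat -> nat -> nat) : nat :=
  sum_lt7 (fun a => sum_lt7 (fun b => sum_lt7 (G a b))).
Definition all_lt7 (P : nat -> bool) : bool := all P (iota 0 7).

Lemma all_lt7P (P : nat -> bool) x : all_lt7 P -> (x < 7)%N -> P x.
Proof. by move=> /allP allP_ lt_x7; apply: allP_; rewrite mem_iota. Qed.

Lemma big_ord7 (G : nat -> nat) : (\sum_(a < 7) G a = sum_lt7 G)%N.
Proof. by rewrite -(big_mkord xpredT G) unlock. Qed.

Lemma big_bid63 (F : bidvec 6 3 -> nat) (G : nat -> nat -> nat -> nat) :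
  (forall a b c, F (bid3 a b c) = G a b c) -> (\sum_s F s = sum_grid7 G)%N.
Proof.
move=> FG; rewrite big_bid3 /sum_grid7 -big_ord7; apply: eq_bigr => a _.
rewrite -big_ord7; apply: eq_bigr => b _.
by rewrite -big_ord7; apply: eq_bigr => c _.
Qed.

(* Twenty times the probability [sigma63] assigns to (a, b, c). *)
Definition weight63 (a b c : nat) : nat :=
  if [:: a; b; c] \in S_a then 2 else if [:: a; b; c] \in S_b then 1 else 0.

Definition wins63 (x y z : nat) : nat :=
  sum_grid7 (fun a b c => weight63 a b c * ((a < x) + (b < y) + (c < z)))%N.
Definition ties63 (x y z : nat) : nat :=
  sum_grid7 (fun a b c => weight63 a b c * ((x == a) + (y == b) + (z == c)))%N.

Lemma weight63_sum : sum_grid7 weight63 = 20%N.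
Proof. by vm_compute. Qed.

Lemma weight63_support : all_lt7 (fun x => all_lt7 (fun y => all_lt7 (fun z =>
  (weight63 x y z != 0) ==> (x + y + z == 6))))%N.
Proof. by vm_compute. Qed.

Lemma weight63_marginals : (all (fun k => all_lt7 (fun j =>
  sum_grid7 (fun a b c => (nth 0 [:: a; b; c] k == j) * weight63 a b c) ==
  if j <= 4 then 4 else 0)) (iota 0 3))%N.
Proof. by vm_compute. Qed.

Lemma wins_ties63_bound : all_lt7 (fun x => all_lt7 (fun y => all_lt7 (fun z =>
  (x + y + z == 6) ==>
  [&& wins63 x y z <= 24, ties63 x y z <= 12 &
      (weight63 x y z != 0) ==> (wins63 x y z == 24) && (ties63 x y z == 12)])))%N.
Proof. by vm_compute. Qed.

Section Sigma63.
Variable R : realType.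
Local Notation bid := (bidvec 6 3).

Definition weight (s : bid) : nat := weight63 (s i0) (s i1) (s i2).

Lemma as_list3 (s : bid) : as_list s = [:: (s i0 : nat); (s i1 : nat); (s i2 : nat)].
Proof.
rewrite /as_list !enum_ordSl enum_ord0 /=.
by congr [:: val (s _); val (s _); val (s _)]; apply: val_inj.
Qed.

Lemma sigma63E (s : bid) : sigma63 R s = (weight s)%:R / 20%:R.
Proof.
rewrite /sigma63 ffunE as_list3 /weight /weight63.
by case: ifP => _; [field | case: ifP => _; [field | rewrite mul0r]].
Qed.

Lemma sigma63_neq0 (s : bid) : (sigma63 R s != 0) = (weight s != 0%N).
Proof. by rewrite sigma63E mulf_eq0 invr_eq0 !pnatr_eq0 orbF. Qed.

Lemma weight_pure (s : bid) : weight s != 0%N -> is_pure s.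
Proof.
rewrite is_pure3; apply/implyP.
exact: (all_lt7P (all_lt7P (all_lt7P weight63_support (ltn_ord (s i0)))
          (ltn_ord (s i1))) (ltn_ord (s i2))).
Qed.

Lemma sigma63_mixed : is_mixed (sigma63 R).
Proof.
split; first by move=> s; rewrite sigma63E divr_ge0 ?ler0n.
split.
  move=> s; apply: contraNeq; rewrite sigma63_neq0; exact: weight_pure.
under eq_bigr do rewrite sigma63E.
rewrite -mulr_suml -natr_sum (@big_bid63 _ weight63) ?weight63_sum ?divff ?pnatr_eq0 //.
by move=> a b c; rewrite /weight; have [-> -> ->] := bid3E a b c.
Qed.

Lemma sigma63_uniform_marginals : uniform_marginals (sigma63 R).
Proof.
move=> k j /=; rewrite big_mkcond /=.
transitivity (\sum_(s : bid) ((s k == j) * weight s)%N%:R / (20%:R : R)).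
  apply: eq_bigr => s _.
  by case: (s k == j); rewrite ?sigma63E ?mul1n // mul0n mul0r.
rewrite -mulr_suml -natr_sum.
rewrite (@big_bid63 _ (fun a b c => (nth 0 [:: a; b; c] k == j) * weight63 a b c)%N).
  have k_iota : nat_of_ord k \in iota 0 3 by rewrite mem_iota ltn_ord.
  have /eqP -> := all_lt7P (allP weight63_marginals _ k_iota) (ltn_ord j).
  by rewrite (_ : (6 %/ 3 = 2)%N) //; case: (j <= 4)%N; [field | rewrite mul0r].
move=> a b c; rewrite /weight; have [-> -> ->] := bid3E a b c.
by congr (_ * _)%N; move: k; apply: ord3P; rewrite ffunE.
Qed.

Variable alpha : R.

Lemma value_against_sigma63 (s : bid) :
  value_against alpha (sigma63 R) s =
  (wins63 (s i0) (s i1) (s i2))%:R / 20%:R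
  + alpha / 2%:R * ((ties63 (s i0) (s i1) (s i2))%:R / 20%:R).
Proof.
transitivity (\sum_(t : bid) ((weight t * wins3 s t)%N%:R / 20%:R
    + alpha / 2%:R * ((weight t * ties3 s t)%N%:R / 20%:R))).
  by apply: eq_bigr => t _; rewrite sigma63E blotto_payoff3E !natrM; ring.
rewrite big_split /= -mulr_sumr -!mulr_suml -!natr_sum.
rewrite (big_bid63 (G := fun a b c => weight63 a b c
                     * ((a < s i0) + (b < s i1) + (c < s i2)))%N); last first.
  by move=> a b c; rewrite /weight /wins3; have [-> -> ->] := bid3E a b c.
rewrite (big_bid63 (G := fun a b c => weight63 a b c
                     * ((nat_of_ord (s i0) == a) + (nat_of_ord (s i1) == b)
                        + (nat_of_ord (s i2) == c)))%N) //.
by move=> a b c; rewrite /weight /ties3; have [-> -> ->] := bid3E a b c.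
Qed.

Definition value63 : R := 24%:R / 20%:R + alpha / 2%:R * (12%:R / 20%:R).

Lemma value_against_sigma63_bound (s : bid) : 0 <= alpha -> is_pure s ->
  value_against alpha (sigma63 R) s <= value63 /\
  (weight s != 0%N -> value_against alpha (sigma63 R) s = value63).
Proof.
rewrite is_pure3 => alpha_ge0 pure_s.
have := all_lt7P (all_lt7P (all_lt7P wins_ties63_bound (ltn_ord (s i0)))
          (ltn_ord (s i1))) (ltn_ord (s i2)).
rewrite pure_s /= => /and3P [le_wins le_ties on_support].
rewrite value_against_sigma63 /value63; split; last first.
  by move=> /(implyP on_support) /andP [/eqP -> /eqP ->].
rewrite -(ler_nat R) in le_wins; rewrite -(ler_nat R) in le_ties.
have inv20_ge0 : (0 : R) <= 20%:R^-1 by rewrite invr_ge0 ler0n.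
apply: lerD; first exact: ler_wpM2r.
by apply: ler_wpM2l; [apply: divr_ge0 | apply: ler_wpM2r].
Qed.

End Sigma63.

Theorem mainTheorem10 (R : realType) (alpha : R) :
  0 <= alpha <= 2%:R ->
  is_mixed (sigma63 R) /\ uniform_marginals (sigma63 R) /\
  symmetric_equilibrium alpha (sigma63 R).
Proof.
move=> /andP [alpha_ge0 _].
split; first exact: sigma63_mixed.
split; first exact: sigma63_uniform_marginals.
apply: (symmetric_equilibrium_of_value_bound (c := value63 alpha)).
- exact: sigma63_mixed.
- by move=> s /(value_against_sigma63_bound alpha_ge0) [].
- move=> s; rewrite sigma63_neq0 => nz_weight.
  by apply: (value_against_sigma63_bound alpha_ge0 (weight_pure nz_weight)).2.
Qed.
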